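(* Assume Assumption A-0 holds, let $T\ge1$, let $\psi_0,\dots,\psi_T$ be bounded measurable functions on $\mathbb{R}^d$ and $\boldsymbol\lambda=(\lambda_0,\dots,\lambda_T)\in\mathbb{R}^{T+1}$. Set $\rho_{T-1}=\lambda_{T-1}\psi_{T-1}+\frac{\lambda_T}{\kappa_T}L_T(\psi_T-m_T(\psi_T))$ and $\tilde{\boldsymbol\lambda}=(\lambda_0,\dots,\lambda_{T-2},1)\in\mathbb{R}^T$. Then $$\langle\tilde{\boldsymbol\lambda},\mathbf V_{T-1}(\psi_0,\dots,\psi_{T-2},\rho_{T-1})\,\tilde{\boldsymbol\lambda}\rangle=\langle\boldsymbol\lambda,\mathbf V_T(\psi_0,\dots,\psi_T)\,\boldsymbol\lambda\rangle-\lambda_T^2\sigma_T^2(\psi_T).$$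
   Context: Hidden Markov model with Markov chain $(X_t)$ on $\mathbb{R}^d$ having initial density $a_0$ and transition densities $a_t(x,x')$ w.r.t. a measure $\mu$, and observation densities $b_t(x,y)$; observations $y_1,\dots,y_T$ fixed. Filter density: $f_{0|0}=a_0$, $f_{t|t}(x)\propto b_t(x,y_t)\int f_{t-1|t-1}(u)a_t(u,x)\mu(du)$ (normalized). Notation: $m_t(\psi)=\int\psi f_{t|t}d\mu$; $L_t\psi(x)=\int a_t(x,u)b_t(u,y_t)\psi(u)\mu(du)$; $\mathbb{1}\equiv1$. Assumption A-0: for every $t\ge1$, $\sup_xL_t\mathbb{1}(x)<\infty$ and $L_t\mathbb{1}(x)>0$ for all $x$; $\kappa_t:=\int L_t\mathbb{1}\,f_{t-1|t-1}d\mu>0$. Variance quantities: $\sigma_t^2(\psi)=\int(\psi-m_t(\psi))^2f_{t|t}d\mu$; $V_0(\psi)=\sigma_0^2(\psi)$, $V_t(\psi)=\sigma_t^2(\psi)+\kappa_t^{-2}V_{t-1}(L_t\psi-m_t(\psi)L_t\mathbb{1})$; $V_{t,t}(\psi,\phi)=\frac12(V_t(\psi+\phi)-V_t(\psi)-V_t(\phi))$; for $r<t$, $V_{r,t}(\psi_r,\psi_t)=\kappa_t^{-1}V_{r,t-1}(\psi_r,L_t(\psi_t-m_t(\psi_t)))$, $V_{t,r}=V_{r,t}$ (with arguments swapped). $\mathbf V_T(\psi_{0:T})=(V_{s,t}(\psi_s,\psi_t))_{0\le s,t\le T}$. *)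

From HB Require Import structures.
From mathcomp Require Import all_boot all_order all_algebra.
From mathcomp Require Import all_classical all_reals all_analysis.
Set Implicit Arguments. Unset Strict Implicit. Unset Printing Implicit Defensive.
Import Order.TTheory GRing.Theory Num.Theory.
Local Open Scope classical_set_scope.
Local Open Scope ring_scope.

Section HMM.
Variables (R : realType) (n : nat).
Notation X := (n.-tuple R).
Variable (mu : {measure set X -> \bar R}).
Variables (a0 : X -> R) (a : nat -> X -> X -> R).
Variables (Y : Type) (b : nat -> X -> Y -> R) (y : nat -> Y).

Definition Int (f : X -> R) : R := Rintegral mu setT f.

Definition Lop (t : nat) (psi : X -> R) : X -> R :=
  fun x => Int (fun u => a t x u * b t u (y t) * psi u).

Definition onefun : X -> R := fun=> 1.

Fixpoint filt (t : nat) : X -> R :=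
  match t with
  | 0 => a0
  | t'.+1 =>
      let g := fun x => b t'.+1 x (y t'.+1) * Int (fun u => filt t' u * a t'.+1 u x) in
      fun x => g x / Int g
  end.

Definition mt (t : nat) (psi : X -> R) : R := Int (fun x => psi x * filt t x).

(* kappa_t = \int L_t 1 f_{t-1|t-1} dmu  (meaningful for t >= 1) *)
Definition kappa (t : nat) : R := Int (fun x => Lop t onefun x * filt t.-1 x).

Definition sigma2 (t : nat) (psi : X -> R) : R :=
  Int (fun x => (psi x - mt t psi) ^+ 2 * filt t x).

Fixpoint Vt (t : nat) (psi : X -> R) : R :=
  match t with
  | 0 => sigma2 0 psi
  | t'.+1 => sigma2 t'.+1 psi +
      (kappa t'.+1)^-2 * Vt t' (fun x => Lop t'.+1 psi x - mt t'.+1 psi * Lop t'.+1 onefun x)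
  end.

Definition Vtt (t : nat) (psi phi : X -> R) : R :=
  (Vt t (psi \+ phi) - Vt t psi - Vt t phi) / 2.

(* Vup r k psi_r psi_t = V_{r, r+k}(psi_r, psi_t) *)
Fixpoint Vup (r k : nat) (psir psit : X -> R) : R :=
  match k with
  | 0 => Vtt r psir psit
  | k'.+1 => (kappa (r + k'.+1))^-1 *
      Vup r k' psir (Lop (r + k'.+1) (fun x => psit x - mt (r + k'.+1) psit))
  end.

Definition Vst (s t : nat) (psis psit : X -> R) : R :=
  if (s <= t)%N then Vup s (t - s) psis psit else Vup t (s - t) psit psis.

Definition Vmat (T : nat) (psi : nat -> X -> R) : 'M[R]_(T.+1) :=
  \matrix_(s < T.+1, t < T.+1) Vst s t (psi s) (psi t).

Definition qform (T : nat) (M : 'M[R]_(T.+1)) (lam : 'rV[R]_(T.+1)) : R :=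
  (lam *m (M *m lam^T)) ord0 ord0.

End HMM.

(* V_t is the quadratic form of a symmetric bilinear form on bounded measurable
   functions (its polarisation), so every V_{s,t} is linear in each argument.
   Unfolding the last step of the recursions gives, with P = L_T(psi_T - m_T(psi_T)),
   V_{i,T}(psi_i, psi_T) = kappa_T^{-1} V_{i,T-1}(psi_i, P) for every i <= T-1 and
   V_T(psi_T) = sigma_T^2(psi_T) + kappa_T^{-2} V_{T-1}(P).  Hence, weighted by lambda_T,
   the last row and column of V_T merge into those of index T-1 once psi_{T-1} is
   replaced by rho_{T-1}, and only lambda_T^2 sigma_T^2(psi_T) is left over.  Linearity
   of the integrals involved holds because the filter densities are integrable and
   L_t maps bounded measurable functions to bounded measurable functions. *)

From Pilot Require Import Defs.
From HB Require Import structures.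
From mathcomp Require Import all_boot all_order all_algebra.
From mathcomp Require Import all_classical all_reals all_analysis measurable_realfun.
From mathcomp Require Import ring lra.
Import Order.TTheory GRing.Theory Num.Theory.
Local Open Scope classical_set_scope.
Local Open Scope ring_scope.

Section HMMVariance.
Variables (R : realType) (n : nat).
Local Notation X := (n.-tuple R).
Variable mu : {measure set X -> \bar R}.
Variables (a0 : X -> R) (a : nat -> X -> X -> R).
Variables (Y : Type) (b : nat -> X -> Y -> R) (y : nat -> Y).

Local Notation Int := (Int mu).
Local Notation L := (Lop mu a b y).
Local Notation one := (@onefun R n).
Local Notation ft := (filt mu a0 a b y).
Local Notation mt := (mt mu a0 a b y).
Local Notation kappa := (kappa mu a0 a b y).
Local Notation sigma2 := (sigma2 mu a0 a b y).
Local Notation Vt := (Vt mu a0 a b y).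
Local Notation Vtt := (Vtt mu a0 a b y).
Local Notation Vup := (Vup mu a0 a b y).
Local Notation Vst := (Vst mu a0 a b y).

Hypothesis mu_sigma_finite : sigma_finite setT mu.
Hypothesis measurable_a0 : measurable_fun setT a0.
Hypothesis a0_ge0 : forall x, 0 <= a0 x.
Hypothesis integral_a0 : (\int[mu]_x (a0 x)%:E = 1)%E.
Hypothesis measurable_a : forall t, (1 <= t)%N ->
  measurable_fun setT (fun p : X * X => a t p.1 p.2).
Hypothesis a_ge0 : forall t x u, (1 <= t)%N -> 0 <= a t x u.
Hypothesis measurable_b : forall t, (1 <= t)%N ->
  measurable_fun setT (fun x => b t x (y t)).
Hypothesis b_ge0 : forall t x, (1 <= t)%N -> 0 <= b t x (y t).
Hypothesis L1_bounded : forall t, (1 <= t)%N -> exists M : R, forall x, L t one x <= M.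
Hypothesis L1_gt0 : forall t x, (1 <= t)%N -> 0 < L t one x.

Definition mu_sf := fun A => mu A.
HB.instance Definition _ := Measure.copy mu_sf mu.
HB.instance Definition _ := @Measure_isSigmaFinite.Build _ _ _ mu_sf mu_sigma_finite.

Definition integrableR (f : X -> R) := mu.-integrable setT (EFin \o f).

Definition bounded_measurable (f : X -> R) :=
  measurable_fun setT f /\ exists M : R, forall x, `|f x| <= M.

Lemma integrableR_measurable f : integrableR f -> measurable_fun setT f.
Proof. by move=> /measurable_int /measurable_EFinP. Qed.

Lemma integrableRZ c {f} : integrableR f -> integrableR (fun x => c * f x).
Proof. by move=> hf; apply: eq_integrable (integrableZl _ c hf). Qed.

Lemma Int_comb c1 c2 {f g} : integrableR f -> integrableR g ->
  Int (fun x => c1 * f x + c2 * g x) = c1 * Int f + c2 * Int g.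
Proof.
move=> hf hg; rewrite /Int RintegralD //; try exact: integrableRZ.
by rewrite !RintegralZl.
Qed.

Lemma integrableR_mul_bounded {h phi} : bounded_measurable phi -> integrableR h ->
  integrableR (fun x => h x * phi x).
Proof.
move=> [mphi [M hM]] hh; have hMh := integrableRZ M hh.
apply: (le_integrable measurableT _ _ hMh) => //.
  by apply/measurable_EFinP; apply: measurable_funM => //; exact: integrableR_measurable.
move=> x _ /=; rewrite lee_fin !normrM mulrC.
by apply: ler_wpM2r => //; apply: le_trans (hM x) (ler_norm _).
Qed.

Lemma measurable_Int_section (F : X * X -> R) :
  measurable_fun setT F -> (forall p, 0 <= F p) ->
  measurable_fun setT (fun x => Int (fun u => F (x, u))).
Proof.
move=> mF F0; apply: measurableT_comp => //.
have mEF : measurable_fun setT (EFin \o F) by exact/measurable_EFinP.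
exact: (@measurable_fun_fubini_tonelli_F _ _ _ _ _ mu_sf _ mEF (fun p => F0 p)).
Qed.

Lemma bounded_measurable_comb c1 c2 {f g} :
  bounded_measurable f -> bounded_measurable g ->
  bounded_measurable (fun x => c1 * f x + c2 * g x).
Proof.
move=> [mf [Mf hf]] [mg [Mg hg]]; split.
  by apply: measurable_funD; apply: measurable_funM.
exists (`|c1| * Mf + `|c2| * Mg) => x.
apply: (le_trans (ler_normD _ _)); rewrite !normrM.
by apply: lerD; apply: ler_wpM2l.
Qed.

Lemma bounded_measurable_cst c : bounded_measurable (fun=> c).
Proof. by split => //; exists `|c|. Qed.

Lemma bounded_measurable_addr {f} c :
  bounded_measurable f -> bounded_measurable (fun x => f x + c).
Proof.
move=> hf; have := bounded_measurable_comb 1 c hf (bounded_measurable_cst 1).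
by congr bounded_measurable; apply/funext => x; ring.
Qed.

Lemma bounded_measurable_mul {g h} : bounded_measurable g -> bounded_measurable h ->
  bounded_measurable (fun x => g x * h x).
Proof.
move=> [mg [Mg hg]] [mh [Mh hh]]; split; first exact: measurable_funM.
exists (`|Mg| * `|Mh|) => x; rewrite normrM.
by apply: ler_pM => //; apply: le_trans (ler_norm _); [exact: hg | exact: hh].
Qed.

Lemma integrableR_fin_num f : measurable_fun setT f ->
  (\int[mu]_x (f x)%:E)%E \is a fin_num -> integrableR f.
Proof.
move=> mf hfin; apply/integrableP; split; first exact/measurable_EFinP.
by rewrite integral_fin_num_abs.
Qed.

Lemma Int_neq0_fin_num f : Int f != 0 -> (\int[mu]_x (f x)%:E)%E \is a fin_num.
Proof. by rewrite /Defs.Int /Rintegral; case: (\int[mu]_x (f x)%:E)%E; rewrite ?eqxx. Qed.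

(* [Rintegral] returns 0 on a non-integrable function, so [0 < L_t 1 x] forces the
   kernel [a_t(x, .) b_t(., y_t)] to be integrable. *)
Lemma integrableR_kernel t x : (1 <= t)%N -> integrableR (fun u => a t x u * b t u (y t)).
Proof.
move=> t1; apply: integrableR_fin_num.
  apply: measurable_funM; last exact: measurable_b.
  exact: measurableT_comp (measurable_a _ t1) (pair1_measurable x).
apply: Int_neq0_fin_num; rewrite gt_eqF //.
have := L1_gt0 t x t1; congr (0 < _).
by apply: eq_Rintegral => u _; rewrite /onefun mulr1.
Qed.

Lemma Lop_comb t c1 c2 (f g : X -> R) x : (1 <= t)%N ->
  bounded_measurable f -> bounded_measurable g ->
  L t (fun u => c1 * f u + c2 * g u) x = c1 * L t f x + c2 * L t g x.
Proof.
move=> t1 hf hg; have hk := integrableR_kernel t x t1.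
rewrite /Lop -Int_comb; try exact: integrableR_mul_bounded.
by apply: eq_Rintegral => u _; ring.
Qed.

Lemma measurable_Lop_ge0 t (g : X -> R) : (1 <= t)%N ->
  measurable_fun setT g -> (forall u, 0 <= g u) -> measurable_fun setT (L t g).
Proof.
move=> t1 mg g0.
apply: (measurable_Int_section (fun p => a t p.1 p.2 * b t p.2 (y t) * g p.2)).
  apply: measurable_funM; last exact: measurableT_comp mg measurable_snd.
  apply: measurable_funM; first exact: measurable_a.
  exact: measurableT_comp (measurable_b _ t1) measurable_snd.
by move=> p; rewrite !mulr_ge0 ?a_ge0 ?b_ge0.
Qed.

Lemma bounded_measurable_Lop {t} {f : X -> R} : (1 <= t)%N ->
  bounded_measurable f -> bounded_measurable (L t f).
Proof.
move=> t1 hf; move: (hf) => [mf [M hM]]; have [ML hML] := L1_bounded _ t1.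
have hfM u : `|f u| <= `|M| by apply: le_trans (hM u) (ler_norm _).
have hfM0 : bounded_measurable (fun u => f u + `|M|) by exact: bounded_measurable_addr.
rewrite /bounded_measurable; split.
  (* shifting f by |M| makes it nonnegative, so Tonelli applies *)
  have -> : L t f = fun x => 1 * L t (fun u => f u + `|M|) x + (- `|M|) * L t one x.
    apply/funext => x; rewrite -Lop_comb //; last exact: bounded_measurable_cst.
    by congr (L t _ x); apply/funext => u; rewrite /onefun; ring.
  apply: measurable_funD; apply: measurable_funM => //; apply: measurable_Lop_ge0 => //.
  - exact: (proj1 hfM0).
  - by move=> u; have := hfM u; rewrite ler_norml => /andP[hl _]; lra.
  - exact: measurable_cst.
pose k x u := a t x u * b t u (y t).
exists (ML * `|M|) => x; have hk : integrableR (k x) := integrableR_kernel t x t1.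
have L1E : L t one x = Int (k x).
  by apply: eq_Rintegral => u _; rewrite /onefun mulr1.
apply: (le_trans (le_normr_Rintegral _ _)) => //; first exact: integrableR_mul_bounded.
apply: (@le_trans _ _ (Int (fun u => k x u * `|M|))).
  apply: le_Rintegral => //.
  - exact/integrable_norm/integrableR_mul_bounded.
  - exact: integrableR_mul_bounded (bounded_measurable_cst _) hk.
  - move=> u _; rewrite normrM (ger0_norm (_ : 0 <= k x u)) ?mulr_ge0 ?a_ge0 ?b_ge0 //.
    by apply: ler_wpM2l; [rewrite mulr_ge0 ?a_ge0 ?b_ge0 | exact: hfM].
rewrite /Defs.Int RintegralZr // -/(Int (k x)) -L1E.
exact/ler_wpM2r/hML.
Qed.

Definition filt_unnormalized t x := b t.+1 x (y t.+1) * Int (fun u => ft t u * a t.+1 u x).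

Lemma filtS t : ft t.+1 = fun x => (Int (filt_unnormalized t))^-1 * filt_unnormalized t x.
Proof. by apply/funext => x; rewrite mulrC. Qed.

Lemma measurable_filt_unnormalized t : measurable_fun setT (ft t) ->
  (forall x, 0 <= ft t x) -> measurable_fun setT (filt_unnormalized t).
Proof.
move=> mf f0; apply: measurable_funM; first exact: measurable_b.
apply: (measurable_Int_section (fun p => ft t p.2 * a t.+1 p.2 p.1)).
  apply: measurable_funM; first exact: measurableT_comp mf measurable_snd.
  exact: measurableT_comp (measurable_a _ _) (@measurable_swap _ _ X X).
by move=> p; rewrite mulr_ge0 ?a_ge0.
Qed.

Lemma measurable_filt_ge0 t : measurable_fun setT (ft t) /\ forall x, 0 <= ft t x.
Proof.
elim: t => [//|t [mf f0]]; rewrite filtS.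
have G0 x : 0 <= filt_unnormalized t x.
  by rewrite mulr_ge0 ?b_ge0 // Rintegral_ge0 // => u _; rewrite mulr_ge0 ?a_ge0.
split => [|x]; first by apply: measurable_funM => //; exact: measurable_filt_unnormalized.
by apply: mulr_ge0 _ (G0 x); rewrite invr_ge0; apply: Rintegral_ge0 => u _; exact: G0.
Qed.

Lemma integrableR_filt t : integrableR (ft t).
Proof.
case: t => [|t].
  by apply: integrableR_fin_num => //; rewrite integral_a0.
have [mf f0] := measurable_filt_ge0 t.
(* a vanishing normaliser makes the filter 0, since [0^-1 = 0] *)
rewrite filtS; have [-> | IG0] := eqVneq (Int (filt_unnormalized t)) 0.
  apply: (eq_integrable measurableT (cst 0%E)); last exact: integrable0.
  by move=> x _; rewrite /= invr0 mul0r.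
apply/integrableRZ/integrableR_fin_num; last exact: Int_neq0_fin_num.
exact: measurable_filt_unnormalized.
Qed.

Lemma integrableR_mul_filt t g : bounded_measurable g ->
  integrableR (fun x => g x * ft t x).
Proof.
move=> hg; have := integrableR_mul_bounded hg (integrableR_filt t).
by congr integrableR; apply/funext => x; rewrite mulrC.
Qed.

Lemma mt_comb t c1 c2 g1 g2 : bounded_measurable g1 -> bounded_measurable g2 ->
  mt t (fun x => c1 * g1 x + c2 * g2 x) = c1 * mt t g1 + c2 * mt t g2.
Proof.
move=> h1 h2; rewrite /Defs.mt -Int_comb; try exact: integrableR_mul_filt.
by apply: eq_Rintegral => x _; ring.
Qed.

Definition cov t g h := Int (fun x => (g x - mt t g) * (h x - mt t h) * ft t x).

Lemma sigma2_cov t g : sigma2 t g = cov t g g.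
Proof. by apply: eq_Rintegral => x _; rewrite expr2. Qed.

Lemma cov_sym t g h : cov t g h = cov t h g.
Proof. by apply: eq_Rintegral => x _; ring. Qed.

Lemma cov_combl t c1 c2 g1 g2 h :
  bounded_measurable g1 -> bounded_measurable g2 -> bounded_measurable h ->
  cov t (fun x => c1 * g1 x + c2 * g2 x) h = c1 * cov t g1 h + c2 * cov t g2 h.
Proof.
move=> h1 h2 hh; have hgh g : bounded_measurable g ->
    integrableR (fun x => (g x - mt t g) * (h x - mt t h) * ft t x).
  by move=> hg; apply/integrableR_mul_filt/bounded_measurable_mul; exact: bounded_measurable_addr.
rewrite /cov mt_comb // -Int_comb; [|exact: hgh..].
by apply: eq_Rintegral => x _; ring.
Qed.

Definition Lcent t g x := L t g x - mt t g * L t one x.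

Lemma bounded_measurable_Lcent t g : (1 <= t)%N ->
  bounded_measurable g -> bounded_measurable (Lcent t g).
Proof.
move=> t1 hg; have := bounded_measurable_comb 1 (- mt t g)
  (bounded_measurable_Lop t1 hg) (bounded_measurable_Lop t1 (bounded_measurable_cst 1)).
by congr bounded_measurable; apply/funext => x; rewrite /Lcent; ring.
Qed.

Lemma Lcent_comb t c1 c2 g1 g2 : (1 <= t)%N ->
  bounded_measurable g1 -> bounded_measurable g2 ->
  Lcent t (fun x => c1 * g1 x + c2 * g2 x) =
  (fun x => c1 * Lcent t g1 x + c2 * Lcent t g2 x).
Proof.
by move=> t1 h1 h2; apply/funext => x; rewrite /Lcent Lop_comb // mt_comb //; ring.
Qed.

Lemma Lop_subr_mt t g : (1 <= t)%N -> bounded_measurable g ->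
  L t (fun x => g x - mt t g) = Lcent t g.
Proof.
move=> t1 hg; apply/funext => x.
have -> : (fun u => g u - mt t g) = (fun u => 1 * g u + (- mt t g) * one u).
  by apply/funext => u; rewrite /onefun; ring.
by rewrite Lop_comb //; [rewrite /Lcent; ring | exact: bounded_measurable_cst].
Qed.

Fixpoint Vbil t g h := match t with
  | 0 => cov 0 g h
  | t'.+1 => cov t'.+1 g h + (kappa t'.+1)^-2 * Vbil t' (Lcent t'.+1 g) (Lcent t'.+1 h)
  end.

Lemma Vt_Vbil t g : Vt t g = Vbil t g g.
Proof. by elim: t g => [|t IH] g /=; rewrite sigma2_cov // IH. Qed.

Lemma Vbil_sym t g h : Vbil t g h = Vbil t h g.
Proof. by elim: t g h => [|t IH] g h /=; rewrite cov_sym // IH. Qed.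

Lemma Vbil_combl t c1 c2 g1 g2 h :
  bounded_measurable g1 -> bounded_measurable g2 -> bounded_measurable h ->
  Vbil t (fun x => c1 * g1 x + c2 * g2 x) h = c1 * Vbil t g1 h + c2 * Vbil t g2 h.
Proof.
elim: t c1 c2 g1 g2 h => [|t IH] c1 c2 g1 g2 h h1 h2 hh /=; first exact: cov_combl.
rewrite cov_combl // Lcent_comb // IH; try exact: bounded_measurable_Lcent.
ring.
Qed.

Lemma Vbil_combr t c1 c2 g1 g2 h :
  bounded_measurable g1 -> bounded_measurable g2 -> bounded_measurable h ->
  Vbil t h (fun x => c1 * g1 x + c2 * g2 x) = c1 * Vbil t h g1 + c2 * Vbil t h g2.
Proof. by move=> h1 h2 hh; rewrite Vbil_sym Vbil_combl // !(Vbil_sym t h). Qed.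

Lemma Vtt_Vbil t g h : bounded_measurable g -> bounded_measurable h ->
  Vtt t g h = Vbil t g h.
Proof.
move=> hg hh; rewrite /Defs.Vtt !Vt_Vbil.
have -> : g \+ h = fun x => 1 * g x + 1 * h x by apply/funext => x; rewrite /= !mul1r.
rewrite Vbil_combl ?Vbil_combr ?(Vbil_sym t h g) //; first lra.
exact: bounded_measurable_comb.
Qed.

Lemma Vup_combr r k c1 c2 g1 g2 h :
  bounded_measurable g1 -> bounded_measurable g2 -> bounded_measurable h ->
  Vup r k h (fun x => c1 * g1 x + c2 * g2 x) = c1 * Vup r k h g1 + c2 * Vup r k h g2.
Proof.
elim: k c1 c2 g1 g2 => [|k IH] c1 c2 g1 g2 h1 h2 hh /=.
  by rewrite !Vtt_Vbil ?Vbil_combr //; exact: bounded_measurable_comb.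
have t1 : (1 <= r + k.+1)%N by rewrite addnS.
rewrite !Lop_subr_mt ?Lcent_comb ?IH //; try exact: bounded_measurable_Lcent.
- ring.
- exact: bounded_measurable_comb.
Qed.

Lemma Vtt_sym t g h : Vtt t g h = Vtt t h g.
Proof.
rewrite /Defs.Vtt (_ : g \+ h = h \+ g); first by congr (_ / _); ring.
by apply/funext => x; rewrite /= addrC.
Qed.

Lemma Vst_sym i j g h : Vst i j g h = Vst j i h g.
Proof. by rewrite /Defs.Vst; case: ltngtP => // ->; rewrite subnn /= Vtt_sym. Qed.

Lemma Vst_combr i S c1 c2 g g1 g2 : (i <= S)%N ->
  bounded_measurable g -> bounded_measurable g1 -> bounded_measurable g2 ->
  Vst i S g (fun x => c1 * g1 x + c2 * g2 x) = c1 * Vst i S g g1 + c2 * Vst i S g g2.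
Proof. by move=> iS hg h1 h2; rewrite /Defs.Vst iS Vup_combr. Qed.

Lemma Vst_combl S c1 c2 g1 g2 g :
  bounded_measurable g1 -> bounded_measurable g2 -> bounded_measurable g ->
  Vst S S (fun x => c1 * g1 x + c2 * g2 x) g = c1 * Vst S S g1 g + c2 * Vst S S g2 g.
Proof. by move=> h1 h2 hg; rewrite Vst_sym Vst_combr // !(Vst_sym S S g). Qed.

Lemma Vst_succr i S g h : (i <= S)%N -> bounded_measurable h ->
  Vst i S.+1 g h = (kappa S.+1)^-1 * Vst i S g (Lcent S.+1 h).
Proof.
move=> iS hh; rewrite /Defs.Vst iS (leq_trans iS (leqnSn S)) subSn //=.
by rewrite addnS subnKC // Lop_subr_mt.
Qed.

Lemma Vst_diag t g : bounded_measurable g -> Vst t t g g = Vt t g.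
Proof. by move=> hg; rewrite /Defs.Vst leqnn subnn /= Vtt_Vbil // Vt_Vbil. Qed.

Definition Vquad K (psi : nat -> X -> R) (l : nat -> R) :=
  \sum_(i < K) \sum_(j < K) l i * Vst i j (psi i) (psi j) * l j.

Lemma qform_VmatE K psi (l : nat -> R) :
  qform (Vmat mu a0 a b y K psi) (\row_(i < K.+1) l i) = Vquad K.+1 psi l.
Proof.
rewrite /qform mxE; apply: eq_bigr => i _; rewrite !mxE big_distrr /=.
by apply: eq_bigr => j _; rewrite !mxE; ring.
Qed.

Lemma Vquad_recr K psi (l : nat -> R) : Vquad K.+1 psi l =
  Vquad K psi l + 2 * l K * \sum_(i < K) l i * Vst i K (psi i) (psi K) +
  l K ^+ 2 * Vst K K (psi K) (psi K).
Proof.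
rewrite /Vquad big_ord_recr /=; under eq_bigr do rewrite big_ord_recr /=.
rewrite big_ord_recr /= big_split /=.
have col_K : \sum_(i < K) l i * Vst i K (psi i) (psi K) * l K =
    l K * \sum_(i < K) l i * Vst i K (psi i) (psi K).
  by rewrite mulr_sumr; apply: eq_bigr => i _; ring.
have row_K : \sum_(i < K) l K * Vst K i (psi K) (psi i) * l i =
    l K * \sum_(i < K) l i * Vst i K (psi i) (psi K).
  by rewrite mulr_sumr; apply: eq_bigr => i _; rewrite Vst_sym; ring.
rewrite col_K row_K; ring.
Qed.

Lemma eq_Vquad K psi psi' l l' :
  (forall i, (i < K)%N -> psi i = psi' i /\ l i = l' i) -> Vquad K psi l = Vquad K psi' l'.
Proof.
move=> eqK; apply: eq_bigr => i _; apply: eq_bigr => j _.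
by have [-> ->] := eqK i (ltn_ord i); have [-> ->] := eqK j (ltn_ord j).
Qed.

Lemma Vquad_reduction S (psi : nat -> X -> R) (lam : nat -> R) :
  (forall i, (i <= S.+1)%N -> bounded_measurable (psi i)) ->
  let rho x := lam S * psi S x +
    lam S.+1 / kappa S.+1 * L S.+1 (fun u => psi S.+1 u - mt S.+1 (psi S.+1)) x in
  Vquad S.+1 (fun i => if i == S then rho else psi i) (fun i => if i == S then 1 else lam i) =
  Vquad S.+2 psi lam - lam S.+1 ^+ 2 * sigma2 S.+1 (psi S.+1).
Proof.
move=> hpsi rho.
have hS := hpsi S (leqnSn S); have hT := hpsi S.+1 (leqnn _).
have hlt i : (i < S)%N -> bounded_measurable (psi i).
  by move=> iS; apply/hpsi/leqW/ltnW.
set P := Lcent S.+1 (psi S.+1); have hP : bounded_measurable P.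
  exact: bounded_measurable_Lcent.
set c := lam S.+1 / kappa S.+1.
have rhoE : rho = fun x => lam S * psi S x + c * P x by rewrite /rho Lop_subr_mt.
have hrho : bounded_measurable (fun x => lam S * psi S x + c * P x).
  exact: bounded_measurable_comb.
pose cross g := \sum_(i < S) lam i * Vst i S (psi i) g.
have cross_rho : \sum_(i < S) (if nat_of_ord i == S then 1 else lam i) *
    Vst i S (if nat_of_ord i == S then rho else psi i) rho =
    lam S * cross (psi S) + c * cross P.
  rewrite !mulr_sumr -big_split /=; apply: eq_bigr => i _.
  have iS : (i <= S)%N := ltnW (ltn_ord i).
  by rewrite ltn_eqF // rhoE Vst_combr //; [ring | exact: hlt].
have cross_T : \sum_(i < S.+1) lam i * Vst i S.+1 (psi i) (psi S.+1) =
    (kappa S.+1)^-1 * (cross P + lam S * Vst S S (psi S) P).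
  rewrite big_ord_recr /= mulrDr mulr_sumr Vst_succr //; congr (_ + _); last by ring.
  by apply: eq_bigr => i _; rewrite Vst_succr //; [ring | exact: ltnW].
have diag_rho : Vst S S rho rho = lam S ^+ 2 * Vst S S (psi S) (psi S) +
    2 * lam S * c * Vst S S (psi S) P + c ^+ 2 * Vst S S P P.
  rewrite rhoE Vst_combr // !Vst_combl //.
  by rewrite (Vst_sym S S P); ring.
have diag_T : Vst S.+1 S.+1 (psi S.+1) (psi S.+1) =
    sigma2 S.+1 (psi S.+1) + (kappa S.+1)^-2 * Vst S S P P.
  by rewrite !Vst_diag.
rewrite !Vquad_recr eqxx cross_rho cross_T diag_rho diag_T.
rewrite (@eq_Vquad S _ psi _ lam) => [|i iS]; last by rewrite ltn_eqF.
by rewrite /c /cross -exprVn; ring.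
Qed.

End HMMVariance.

Theorem mainTheorem3 (R : realType) (n : nat)
  (mu : {measure set (n.-tuple R) -> \bar R})
  (a0 : n.-tuple R -> R) (a : nat -> n.-tuple R -> n.-tuple R -> R)
  (Y : Type) (b : nat -> n.-tuple R -> Y -> R) (y : nat -> Y)
  (T : nat) (psi : nat -> n.-tuple R -> R) (lam : nat -> R) :
  sigma_finite setT mu ->
  measurable_fun setT a0 -> (forall x, 0 <= a0 x) ->
  (\int[mu]_x (a0 x)%:E = 1)%E ->
  (forall t, (1 <= t)%N ->
     [/\ measurable_fun setT (fun p : n.-tuple R * n.-tuple R => a t p.1 p.2),
         (forall x u, 0 <= a t x u) &
         (forall x, (\int[mu]_u (a t x u)%:E = 1)%E)]) ->
  (forall t, (1 <= t)%N ->
     measurable_fun setT (fun x => b t x (y t)) /\ (forall x, 0 <= b t x (y t))) ->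
  (* Assumption A-0 *)
  (forall t, (1 <= t)%N ->
     [/\ (exists M : R, forall x, Lop mu a b y t (@onefun R n) x <= M),
         (forall x, 0 < Lop mu a b y t (@onefun R n) x) &
         0 < kappa mu a0 a b y t]) ->
  (1 <= T)%N ->
  (forall i, (i <= T)%N ->
     measurable_fun setT (psi i) /\ exists M : R, forall x, `|psi i x| <= M) ->
  let rho := fun x => lam T.-1 * psi T.-1 x +
      lam T / kappa mu a0 a b y T *
      Lop mu a b y T (fun u => psi T u - mt mu a0 a b y T (psi T)) x in
  let psit := fun i => if i == T.-1 then rho else psi i in
  let lamt : 'rV[R]_(T.-1.+1) := \row_(i < T.-1.+1) (if val i == T.-1 then 1 else lam i) in
  let lamv : 'rV[R]_(T.+1) := \row_(i < T.+1) lam i in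
  qform (Vmat mu a0 a b y T.-1 psit) lamt =
  qform (Vmat mu a0 a b y T psi) lamv - lam T ^+ 2 * sigma2 mu a0 a b y T (psi T).
Proof.
move=> mu_sigma_finite a0_meas a0_ge0 a0_int a_props b_props A0 T_ge1 psi_bm.
case: T T_ge1 psi_bm => [//|S] _ psi_bm rho psit lamt lamv.
rewrite /lamt /lamv qform_VmatE.
rewrite (@qform_VmatE R n mu a0 a Y b y S psit (fun k => if k == S then 1 else lam k)).
apply: Vquad_reduction => //.
- by move=> t /a_props[].
- by move=> t x u /a_props[_ + _]; apply.
- by move=> t /b_props[].
- by move=> t x /b_props[_]; apply.
- by move=> t /A0[].
- by move=> t x /A0[_ + _]; apply.
Qed.
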